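(* For every planar tree $t$, $\mathrm{GD}(t)=\mathrm{GD}(\iota(t))$.
   Context: A planar tree has linearly ordered children at each node, each node being a leaf or having $\ge2$ children (internal node); $\deg t$ = number of leaves minus one. For planar trees $s,r$, $s/r$ is the tree obtained by identifying the root of $s$ with the leftmost leaf of $r$. For $t$ of degree $n$, $\mathrm{GD}(t)=\{i\in\{1,\dots,n-1\}: t=s/r\text{ for some planar trees } s,r \text{ with }\deg s=i\}$. A generalized Stirling permutation (GSP) is a planar tree with a bijection $\kappa$ from its internal nodes to $\{1,\dots,N\}$ increasing from each internal node to its internal children. Its word $\mathbf w(u)=u_1\cdots u_n$: a leaf has empty word; a node $x$ with children $c_1,\dots,c_k$ has word $\mathbf w(c_1)\kappa(x)\mathbf w(c_2)\cdots\kappa(x)\mathbf w(c_k)$. $\mathrm{GD}(u)=\{i\in\{1,\dots,n-1\}: u_a>u_b \text{ for all } a\le i<b\}$. For each planar tree $t$ there is exactly one GSP with underlying tree $t$ whose word is $213$-avoiding (no $i<j<k$ with $w_k>w_i>w_j$); it is denoted $\iota(t)$. *)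

From mathcomp Require Import all_boot.
Set Implicit Arguments. Unset Strict Implicit. Unset Printing Implicit Defensive.

(* Planar (rooted, ordered) trees; a node with an empty child list is not
   used (validity is enforced by [planar]). *)
Inductive ptree : Type := Leaf | Node of seq ptree.

Fixpoint planar (t : ptree) : bool :=
  match t with
  | Leaf => true
  | Node cs => (1 < size cs) && all planar cs
  end.

Fixpoint nleaves (t : ptree) : nat :=
  match t with
  | Leaf => 1
  | Node cs => sumn (map nleaves cs)
  end.

Definition deg (t : ptree) : nat := (nleaves t).-1.

(* s / r : identify the root of s with the leftmost leaf of r *)
Fixpoint graft (s r : ptree) : ptree :=
  match r with
  | Leaf => s
  | Node [::] => Node [::]
  | Node (c :: cs) => Node (graft s c :: cs)
  end.

Definition GDtree (t : ptree) (i : nat) : Prop :=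
  [/\ 1 <= i, i <= (deg t).-1 &
      exists s r, [/\ planar s, planar r, deg s = i & t = graft s r]].

Inductive ltree : Type := LLeaf | LNode of nat & seq ltree.

Fixpoint forget (u : ltree) : ptree :=
  match u with
  | LLeaf => Leaf
  | LNode _ cs => Node (map forget cs)
  end.

Fixpoint labels (u : ltree) : seq nat :=
  match u with
  | LLeaf => [::]
  | LNode k cs => k :: flatten (map labels cs)
  end.

Fixpoint increasing (u : ltree) : bool :=
  match u with
  | LLeaf => true
  | LNode k cs =>
      all (fun c => match c with LLeaf => true | LNode k' _ => k < k' end) cs
      && all increasing cs
  end.

(* generalized Stirling permutation: planar underlying tree, labelling is a
   bijection internal nodes -> {1..N}, increasing *)
Definition GSP (u : ltree) : Prop :=
  [/\ planar (forget u),
      perm_eq (labels u) (iota 1 (size (labels u))) & increasing u].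

Fixpoint word (u : ltree) : seq nat :=
  match u with
  | LLeaf => [::]
  | LNode k cs =>
      match cs with
      | [::] => [::]
      | c :: cs' => word c ++ flatten (map (fun c' => k :: word c') cs')
      end
  end.

Definition avoids213 (w : seq nat) : Prop :=
  forall i j k, i < j -> j < k -> k < size w ->
    ~ (nth 0 w j < nth 0 w i /\ nth 0 w i < nth 0 w k).

(* GD(u) for a GSP with word u_1...u_n (1-indexed positions a, b) *)
Definition GDgsp (u : ltree) (i : nat) : Prop :=
  let w := word u in
  [/\ 1 <= i, i <= (size w).-1 &
      forall a b, 1 <= a -> a <= i -> i < b -> b <= size w ->
        nth 0 w b.-1 < nth 0 w a.-1].

From mathcomp Require Import all_boot zify.
Set Implicit Arguments. Unset Strict Implicit. Unset Printing Implicit Defensive.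

(* Write t = Node (c1 :: cs) and, for a GSP u on t with root
   label k, w(u) = w(c1) ++ k :: W, where W is the word of the GSP obtained
   from u by deleting its first subtree.
   - On the tree side, t = s / r forces r to have a first child r1 with
     c1 = s / r1; hence GD(t) = {deg c1} U GD(c1) (r1 a leaf or not).
   - On the word side, labels of c1 exceed k (increasing), k is the minimum
     of k :: W, and labels are distinct; 213-avoidance then forces every
     letter of w(c1) to exceed every letter of k :: W.  Consequently
     GD(w(u)) = {|w(c1)|} U GD(w(c1)).
   Since |w(c1)| = deg c1, induction on u gives GD(t) = GD(w(u)).
   Existence: label the root b and the children with consecutive blocks of
   labels, the leftmost child receiving the largest block; the resulting
   word is 213-avoiding by the same concatenation argument. *)

Definition GDw (w : seq nat) (i : nat) : Prop :=
  [/\ 1 <= i, i <= (size w).-1 &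
      forall a b, 1 <= a -> a <= i -> i < b -> b <= size w ->
        nth 0 w b.-1 < nth 0 w a.-1].

Lemma avoids213_prefix (A B : seq nat) : avoids213 (A ++ B) -> avoids213 A.
Proof.
move=> H i j k Hij Hjk Hk; have := H i j k Hij Hjk.
rewrite size_cat !nth_cat (ltn_trans Hij (ltn_trans Hjk Hk)) (ltn_trans Hjk Hk) Hk.
by apply; rewrite ltn_addr.
Qed.

Lemma avoids213_cat (A B : seq nat) : avoids213 A -> avoids213 B ->
  (forall x y : nat, x \in A -> y \in B -> y <= x) -> avoids213 (A ++ B).
Proof.
move=> HA HB AgeB i j k Hij Hjk; rewrite size_cat => Hk; rewrite !nth_cat.
have [Hk'|Hk'] := ltnP k (size A).
  by rewrite (ltn_trans Hij (ltn_trans Hjk Hk')) (ltn_trans Hjk Hk'); exact: HA.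
have [Hi'|Hi'] := ltnP i (size A).
  by move=> [_]; rewrite ltnNge AgeB ?mem_nth // ltn_subLR.
have -> : (j < size A) = false by lia.
apply: HB; lia.
Qed.

Lemma avoids213_cons (k : nat) (B : seq nat) : avoids213 B ->
  (forall y : nat, y \in B -> k <= y) -> avoids213 (k :: B).
Proof.
move=> HB kleB [|i] [|j] [|l] //= Hij Hjl Hl; last by apply: HB; lia.
move=> [Hlt _]; have jB : j < size B by lia.
by have := kleB _ (mem_nth 0 jB); rewrite leqNgt Hlt.
Qed.

Lemma nth_cat_dominated (A B : seq nat) a b :
  (forall x y : nat, x \in A -> y \in B -> y < x) ->
  a < size A <= b -> b < size (A ++ B) -> nth 0 (A ++ B) b < nth 0 (A ++ B) a.
Proof.
move=> AgtB /andP[Ha Hb]; rewrite size_cat => Hb'.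
rewrite !nth_cat Ha; have -> : (b < size A) = false by rewrite ltnNge Hb.
by apply: AgtB; apply: mem_nth; rewrite // ltn_subLR.
Qed.

Lemma GDw_cat_dominated (A B : seq nat) i :
  (forall x y : nat, x \in A -> y \in B -> y < x) -> B != [::] -> 1 <= i <= size A ->
  GDw (A ++ B) i <-> i = size A \/ GDw A i.
Proof.
move=> AgtB B0 /andP[i1 iA]; have B1 : 0 < size B by rewrite lt0n size_eq0.
split=> [[_ _ D]|GDA].
  have [iA'|] := ltnP i (size A); last by left; apply/eqP; rewrite eqn_leq iA.
  right; split=> // [|a b a1 ai ib bA]; first lia.
  have bA' : b.-1 < size A by lia.
  have aA : a.-1 < size A by lia.
  by have := D a b a1 ai ib; rewrite size_cat !nth_cat bA' aA; apply; lia.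
split=> //; first by rewrite size_cat; lia.
move=> a b a1 ai ib; rewrite size_cat => bAB.
have [bA|bA] := leqP b (size A); last first.
  by apply: nth_cat_dominated => //; [apply/andP; split|rewrite size_cat]; lia.
case: GDA => [iE|[_ _ D]]; first lia.
have bA' : b.-1 < size A by lia.
have aA : a.-1 < size A by lia.
by rewrite !nth_cat bA' aA; exact: D.
Qed.

Lemma GDw_le_min_pos (w : seq nat) p i : p < size w ->
  nth 0 w p <= nth 0 w (size w).-1 -> GDw w i -> i <= p.
Proof.
move=> pw minp [i1 iw D]; rewrite leqNgt; apply/negP => pi.
have := D p.+1 (size w) erefl pi ltac:(lia) (leqnn _).
by rewrite ltnNge minp.
Qed.

Lemma dominated_of_avoids213 (A W : seq nat) k :
  (forall x : nat, x \in A -> k < x) -> (forall x : nat, x \in A -> x \notin W) ->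
  avoids213 (A ++ k :: W) -> forall x y : nat, x \in A -> y \in k :: W -> y < x.
Proof.
move=> Agtk AW Hav x y xA; rewrite in_cons => /orP[/eqP->|yW]; first exact: Agtk.
have xy : y != x by apply: contraNneq (AW x xA) => <-.
rewrite ltn_neqAle xy leqNgt; apply/negP => xlty.
pose a := index x A; pose m := index y W.
have aA : a < size A by rewrite index_mem.
have mW : m < size W by rewrite index_mem.
apply: (Hav a (size A) (size A + m.+1)); rewrite ?size_cat /=; try lia.
rewrite !nth_cat aA ltnn subnn ifF; last by lia.
by rewrite addnC addnK /= !nth_index // Agtk.
Qed.

Lemma GDw_split (A W : seq nat) k i :
  (forall x : nat, x \in A -> k < x) -> (forall y : nat, y \in W -> k <= y) ->
  (forall x : nat, x \in A -> x \notin W) -> avoids213 (A ++ k :: W) ->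
  GDw (A ++ k :: W) i <-> (1 <= i /\ i = size A) \/ GDw A i.
Proof.
move=> Agtk kleW AW Hav.
have AgtB := dominated_of_avoids213 Agtk AW Hav.
have GDcat := GDw_cat_dominated (i := i) AgtB erefl.
split=> [GD|].
  have iA : i <= size A.
    apply: (@GDw_le_min_pos _ (size A)) GD; first by rewrite size_cat addnS ltnS leq_addr.
    rewrite nth_last last_cat nth_cat ltnn subnn /=.
    by have := mem_last k W; rewrite in_cons => /orP[/eqP->|/kleW].
  have i1 : 1 <= i by case: GD.
  have iAb : 0 < i <= size A by rewrite i1 iA.
  case/(GDcat iAb): GD => [iE|]; [by left|by right].
case=> [[i1 iE]|GDA]; apply/GDcat.
- by rewrite i1 iE leqnn.
- by left.
- by case: GDA => i1 iA _; rewrite i1 /=; lia.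
- by right.
Qed.

Fixpoint ptree_ind2 (P : ptree -> Prop) (HL : P Leaf)
  (HN : forall cs, (forall c, List.In c cs -> P c) -> P (Node cs)) (t : ptree) : P t :=
  match t with
  | Leaf => HL
  | Node cs => HN cs ((fix F (l : seq ptree) : forall c, List.In c l -> P c :=
       match l with
       | [::] => fun c (H : List.In c [::]) => False_ind (P c) H
       | c0 :: l0 => fun c H => match H with
            | or_introl E => eq_ind c0 P (ptree_ind2 HL HN c0) c E
            | or_intror H' => F l0 c H' end
       end) cs)
  end.

Fixpoint ltree_ind2 (P : ltree -> Prop) (HL : P LLeaf)
  (HN : forall k cs, (forall c, List.In c cs -> P c) -> P (LNode k cs))
  (t : ltree) : P t :=
  match t with
  | LLeaf => HL
  | LNode k cs => HN k cs ((fix F (l : seq ltree) : forall c, List.In c l -> P c :=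
       match l with
       | [::] => fun c (H : List.In c [::]) => False_ind (P c) H
       | c0 :: l0 => fun c H => match H with
            | or_introl E => eq_ind c0 P (ltree_ind2 HL HN c0) c E
            | or_intror H' => F l0 c H' end
       end) cs)
  end.

Lemma all_In (T : Type) (P : pred T) (l : seq T) c : all P l -> List.In c l -> P c.
Proof. by elim: l => //= a l IH /andP[Pa Pl] [<-|/IH]; last exact. Qed.

Lemma mem_flatten_map (T : Type) (f : T -> seq nat) (l : seq T) x :
  x \in flatten (map f l) <-> exists2 c, List.In c l & x \in f c.
Proof.
elim: l => [|a l IH] /=; first by split=> // -[].
rewrite mem_cat; split=> [/orP[xa|/IH[c cl xc]]|[c [<-|cl] xc]].
- by exists a; first left.
- by exists c; first right.
- by rewrite xc.
- by apply/orP; right; apply/IH; exists c.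
Qed.

Lemma word_cons2 k c1 c2 cs :
  word (LNode k [:: c1, c2 & cs]) = word c1 ++ k :: word (LNode k (c2 :: cs)).
Proof. by []. Qed.

Lemma mem_word_labels u x : x \in word u -> x \in labels u.
Proof.
elim/ltree_ind2: u x => // k [|c cs] IH x //=.
rewrite in_cons !mem_cat => /orP[xc|/mem_flatten_map[c' c'cs]].
  by rewrite (IH c (or_introl erefl) _ xc) orbT.
rewrite in_cons => /orP[->//|xc'].
apply/orP; right; apply/orP; right; apply/mem_flatten_map.
by exists c' => //; apply: IH xc'; right.
Qed.

(* The label of the root of u (irrelevant for a leaf). *)
Definition root_label (u : ltree) : nat :=
  if u is LNode k _ then k else 0.

Lemma increasing_root_le u x : increasing u -> x \in labels u -> root_label u <= x.
Proof.
elim/ltree_ind2: u => // k cs IH /= /andP[kltc incc].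
rewrite in_cons => /orP[/eqP->//|/mem_flatten_map[c ccs xc]].
have := IH c ccs (all_In incc ccs) xc.
move: (all_In kltc ccs) xc; case: c {ccs} => //= k' _ kk' _ /(leq_trans kk').
exact: ltnW.
Qed.

Lemma increasing_child_gt k cs c x : increasing (LNode k cs) -> List.In c cs ->
  x \in labels c -> k < x.
Proof.
move=> /= /andP[kltc incc] ccs xc.
have := increasing_root_le (all_In incc ccs) xc.
by move: (all_In kltc ccs) xc; case: c {ccs} => //= k' _ kk' _ /(leq_trans kk').
Qed.

Lemma nleaves_gt0 t : planar t -> 0 < nleaves t.
Proof.
elim/ptree_ind2: t => // [[|c cs]] IH //= /andP[_ /andP[pc _]].
by rewrite addn_gt0 (IH c (or_introl erefl) pc).
Qed.

Lemma nleaves_node_gt1 cs : planar (Node cs) -> 1 < nleaves (Node cs).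
Proof.
case: cs => [|c1 [|c2 cs]] //= /and3P[p1 p2 _].
by have := nleaves_gt0 p1; have := nleaves_gt0 p2; lia.
Qed.

(* Grafting identifies one leaf of r with the root of s. *)
Lemma nleaves_graft s r : planar r -> nleaves (graft s r) = (nleaves s + nleaves r).-1.
Proof.
elim/ptree_ind2: r => [|[|c cs] IH] //=; first by rewrite addn1.
move=> /andP[_ /andP[pc _]]; rewrite (IH c (or_introl erefl) pc).
by have := nleaves_gt0 pc; lia.
Qed.

Lemma planar_set_first c r cs : planar (Node (c :: cs)) -> planar r ->
  planar (Node (r :: cs)).
Proof. by move=> /= /and3P[-> _ ->] ->. Qed.

Lemma graft_first s r cs : graft s (Node (r :: cs)) = Node (graft s r :: cs).
Proof. by []. Qed.

Lemma GDtree_first_child c cs i : planar (Node (c :: cs)) ->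
  GDtree (Node (c :: cs)) i <-> (1 <= i /\ i = deg c) \/ GDtree c i.
Proof.
move=> pt; move: (pt) => /= /and3P[_ pc _].
have pcl : planar (Node (Leaf :: cs)) by exact: planar_set_first pt _.
have c_lt_t : nleaves c < nleaves (Node (c :: cs)).
  have := nleaves_graft c pcl; rewrite graft_first => ->.
  by have := nleaves_node_gt1 pcl; lia.
rewrite /GDtree /deg; split.
  case=> i1 it [s [r [ps pr ds E]]].
  case: r pr E => [|[|r1 rs] pr] //=.
    by move=> _ E; move: it ds; rewrite -E /deg; have := nleaves_gt0 ps; lia.
  case=> Ec Ecs; move: pr => /= /and3P[_ pr1 prs].
  case: r1 pr1 Ec => [|rs1] pr1 Ec; first by left; split=> //; rewrite Ec -ds.
  right; split=> //; last by exists s, (Node rs1).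
  rewrite Ec nleaves_graft //; move: ds; rewrite /deg.
  by have := nleaves_node_gt1 pr1; have := nleaves_gt0 ps; lia.
case=> [[i1 ic]|[i1 ic [s [r [ps pr ds E]]]]]; split=> //; try lia.
- by exists c, (Node (Leaf :: cs)).
- exists s, (Node (r :: cs)); split=> //; first exact: planar_set_first pt pr.
  by rewrite E.
Qed.

Lemma size_word u : planar (forget u) -> (size (word u)).+1 = nleaves (forget u).
Proof.
elim/ltree_ind2: u => // k [|c cs] IH //= /andP[_ /andP[pc pcs]].
rewrite size_cat -addSn (IH c (or_introl erefl) pc); congr (_ + _).
have {}IH c' : List.In c' cs -> planar (forget c') ->
    (size (word c')).+1 = nleaves (forget c') by move=> ?; apply: IH; right.
elim: cs IH pcs {pc} => //= c' cs IHcs IH /andP[pc' pcs].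
rewrite size_cat -addSn (IH c' (or_introl erefl) pc') IHcs // => c'' ?.
by apply: IH; right.
Qed.

Lemma GDtree_eq_GDw u : planar (forget u) -> uniq (labels u) -> increasing u ->
  avoids213 (word u) -> forall i, GDtree (forget u) i <-> GDw (word u) i.
Proof.
elim/ltree_ind2: u => [|k cs IH] pu uniq_u inc_u av_u i.
  by rewrite /GDtree /GDw /deg /=; split=> -[i1 i0 _]; lia.
case: cs IH pu uniq_u inc_u av_u => [|c1 [|c2 cs]] IH pu uniq_u inc_u av_u //.
pose v := LNode k (c2 :: cs).
have /= /andP[pc1 _] := pu.
have /= /andP[_] := uniq_u; rewrite cat_uniq => /and3P[uniq_c1 disj _].
have /= /andP[_ /andP[inc_c1 _]] := inc_u.
have inc_v : increasing v.
  by move: inc_u => /= /andP[/andP[_ h1] /andP[_ h2]]; rewrite /v /= h1 h2.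
rewrite word_cons2 in av_u *.
have c1_gt_k x : x \in word c1 -> k < x.
  by move/mem_word_labels; apply: increasing_child_gt inc_u _; left.
have k_le_v y : y \in word v -> k <= y.
  by move/mem_word_labels/(increasing_root_le inc_v).
have c1_notin_v x : x \in word c1 -> x \notin word v.
  move=> xc1; apply/negP => /mem_word_labels; rewrite in_cons => /orP[/eqP xk|xv].
    by have := c1_gt_k x xc1; rewrite xk ltnn.
  by have := hasPn disj x xv; rewrite (mem_word_labels xc1).
have deg_c1 : deg (forget c1) = size (word c1) by rewrite /deg -(size_word pc1).
rewrite (GDtree_first_child i pu) (GDw_split i c1_gt_k k_le_v c1_notin_v av_u).
by rewrite deg_c1 (IH c1 (or_introl erefl) pc1 uniq_c1 inc_c1 (avoids213_prefix av_u)).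
Qed.

Fixpoint ninternal (t : ptree) : nat :=
  if t is Node cs then (sumn (map ninternal cs)).+1 else 0.

(* The 213-avoiding labelling of t by b, b+1, ..., b + ninternal t - 1: the
   root gets b; the children, from right to left, get consecutive blocks, so
   every label of a child exceeds every label of the children to its right.
   The inner fixpoint is needed for the nested recursion; [label213_children]
   below is the same function, stated at top level for reasoning. *)
Fixpoint label213 (t : ptree) (b : nat) {struct t} : ltree :=
  match t with
  | Leaf => LLeaf
  | Node cs => LNode b ((fix children (cs : seq ptree) (b : nat) : seq ltree :=
      match cs with
      | [::] => [::]
      | c :: cs' => label213 c (b + sumn (map ninternal cs')) :: children cs' b
      end) cs b.+1)
  end.

Fixpoint label213_children (cs : seq ptree) (b : nat) : seq ltree :=
  if cs is c :: cs' then
    label213 c (b + sumn (map ninternal cs')) :: label213_children cs' b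
  else [::].

Lemma label213_node cs b :
  label213 (Node cs) b = LNode b (label213_children cs b.+1).
Proof. by rewrite /=; congr LNode; elim: cs b.+1 => //= c cs IH b'; rewrite IH. Qed.

Lemma forget_label213 t b : forget (label213 t b) = t.
Proof.
elim/ptree_ind2: t b => // cs IH b; rewrite label213_node /=; congr Node.
elim: cs IH b.+1 => //= c cs IHcs IH b'.
by rewrite (IH c (or_introl erefl)) IHcs // => c' ?; apply: IH; right.
Qed.

Lemma labels_label213 t b : perm_eq (labels (label213 t b)) (iota b (ninternal t)).
Proof.
elim/ptree_ind2: t b => // cs IH b; rewrite label213_node /= perm_cons.
elim: cs IH b.+1 => //= c cs IHcs IH b'.
rewrite [ninternal c + _]addnC iotaD perm_catC.
apply: perm_cat; last exact: IH (or_introl erefl) _.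
by apply: IHcs => c' ?; apply: IH; right.
Qed.

Lemma mem_labels_label213 t b x : x \in labels (label213 t b) -> b <= x < b + ninternal t.
Proof. by rewrite (perm_mem (labels_label213 t b)) mem_iota. Qed.

(* The labelling is increasing: children's blocks lie above the parent. *)
Lemma increasing_label213 t b : increasing (label213 t b).
Proof.
elim/ptree_ind2: t b => // cs IH b; rewrite label213_node /=.
have : b < b.+1 by [].
elim: cs IH b.+1 => //= c cs IHcs IH b' bb'.
have /andP[roots incs] := IHcs (fun c' h => IH c' (or_intror h)) b' bb'.
rewrite roots incs (IH c (or_introl erefl)) !andbT.
by case: c {IH} => // cs'; rewrite label213_node; lia.
Qed.

(* The word of the labelling is 213-avoiding: each child's block dominates
   the root label and all blocks to its right. *)
Lemma avoids213_label213 t b : avoids213 (word (label213 t b)).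
Proof.
elim/ptree_ind2: t b => [|cs IH] b; first by move=> ? ? ? _ _.
elim: cs IH b => [|c [|c' cs] IHcs] IH b; first by move=> ? ? ? _ _.
  by rewrite label213_node /= cats0; exact: IH (or_introl erefl) _.
have -> : word (label213 (Node [:: c, c' & cs]) b) =
    word (label213 c (b.+1 + sumn (map ninternal (c' :: cs)))) ++
    b :: word (label213 (Node (c' :: cs)) b) by rewrite !label213_node.
apply: avoids213_cat; first exact: IH (or_introl erefl) _.
  apply: avoids213_cons; first by apply: IHcs => c'' ?; apply: IH; right.
  by move=> y /mem_word_labels /mem_labels_label213 /andP[].
move=> x y /mem_word_labels /mem_labels_label213 /andP[bx _].
rewrite in_cons => /orP[/eqP->|/mem_word_labels /mem_labels_label213 /andP[_ ylt]].
  by rewrite /= in bx; lia.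
by rewrite /= in bx ylt; lia.
Qed.

Lemma GSP_label213 t : planar t -> GSP (label213 t 1).
Proof.
move=> pt; split; [by rewrite forget_label213| |exact: increasing_label213].
by rewrite (perm_size (labels_label213 t 1)) size_iota; exact: labels_label213.
Qed.

Theorem mainTheorem11 (t : ptree) : planar t ->
  (exists u : ltree, [/\ GSP u, forget u = t & avoids213 (word u)]) /\
  (forall u : ltree, GSP u -> forget u = t -> avoids213 (word u) ->
     forall i, GDtree t i <-> GDgsp u i).
Proof.
move=> pt; split.
  exists (label213 t 1); split; first exact: GSP_label213.
    exact: forget_label213.
  exact: avoids213_label213.
move=> u [pu perm_u inc_u] <- av_u i.
have uniq_u : uniq (labels u) by rewrite (perm_uniq perm_u) iota_uniq.
exact: GDtree_eq_GDw.
Qed.
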